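(* Let $(V_{cl}, V_{op}, m_{cl-op})$ be an open-closed field algebra and let $\mathbb{Y}_{cl-op}(u; z, \bar{z})v := m_{cl-op}^{(1;1)}(u;v;z,\bar{z};0)$ for $u\in V_{cl}$, $v\in V_{op}$, $z\in \mathbb{H}$. Then for $u\in V_{cl}$, \begin{eqnarray*} [\mathbf{d}_{op}, \mathbb{Y}_{cl-op}(u; z, \bar{z})] &=& \mathbb{Y}_{cl-op}((\mathbf{d}_{cl}^L + \mathbf{d}_{cl}^R)u; z, \bar{z}) + \left( z\frac{\partial}{\partial z} + \bar{z} \frac{\partial}{\partial \bar{z}} \right) \mathbb{Y}_{cl-op}(u; z, \bar{z}). \end{eqnarray*}
   Context: An open-closed field algebra consists of an $\mathbb{R}\times\mathbb{R}$-graded full field algebra $(V_{cl}, m_{cl}, \mathbf{d}_{cl}^L, \mathbf{d}_{cl}^R, D_{cl}^L, D_{cl}^R)$ (with left/right grading operators $\mathbf{d}_{cl}^L,\mathbf{d}_{cl}^R$), an $\mathbb{R}$-graded vector space $V_{op}$ with grading operator $\mathbf{d}_{op}$ and an operator $D_{op}$, and maps $m_{cl-op}^{(l;n)}: V_{cl}^{\otimes l}\otimes V_{op}^{\otimes n}\times M_{\mathbb{H}}^l\times\Lambda^n\to\overline{V}_{op}$ (with $M_{\mathbb{H}}^l$ the configuration space of $l$ distinct points in the upper half plane $\mathbb{H}$ and $\Lambda^n=\{r_1>\dots>r_n\geq 0\}$), linear in the vector arguments and smooth in the positions, satisfying identity, convergence, permutation, $D_{op}$ and the following grading property: for $a\in\mathbb{R}$,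 $e^{a\mathbf{d}_{op}} m_{cl-op}^{(l;n)}(u_1,\dots,u_l;v_1,\dots,v_n;z_1,\bar z_1,\dots,z_l,\bar z_l;r_1,\dots,r_n) = m_{cl-op}^{(l;n)}(e^{a(\mathbf{d}_{cl}^L+\mathbf{d}_{cl}^R)}u_1,\dots,e^{a(\mathbf{d}_{cl}^L+\mathbf{d}_{cl}^R)}u_l; e^{a\mathbf{d}_{op}}v_1,\dots,e^{a\mathbf{d}_{op}}v_n; e^az_1,e^a\bar z_1,\dots,e^az_l,e^a\bar z_l; e^ar_1,\dots,e^ar_n)$. *)

From HB Require Import structures.
From mathcomp Require Import all_boot all_order all_algebra.
From mathcomp Require Import all_classical all_reals topology normedtype derive sequences.
From mathcomp.analysis Require Import exp.
From mathcomp Require Import complex.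
Set Implicit Arguments. Unset Strict Implicit. Unset Printing Implicit Defensive.
Import Order.TTheory GRing.Theory Num.Theory numFieldNormedType.Exports.
Local Open Scope ring_scope.
Local Open Scope complex_scope.

Section Defs.
Variable R : realType.
Local Notation C := (R[i]).

Definition pdx (f : R -> R -> R) : R -> R -> R :=
  fun x y => derive1 (fun t => f t y) x.
Definition pdy (f : R -> R -> R) : R -> R -> R :=
  fun x y => derive1 (fun t => f x t) y.

Fixpoint Ck_on (D : R -> R -> Prop) (k : nat) (f : R -> R -> R) : Prop :=
  match k with
  | 0 => forall x y, D x y -> {for (x, y), continuous (fun p : R * R => f p.1 p.2)}
  | k'.+1 =>
      (forall x y, D x y -> {for (x, y), continuous (fun p : R * R => f p.1 p.2)}) /\
      (forall x y, D x y ->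
         derivable (fun t => f t y) x 1 /\ derivable (fun t => f x t) y 1) /\
      Ck_on D k' (pdx f) /\ Ck_on D k' (pdy f)
  end.

Definition smooth_on (D : R -> R -> Prop) (f : R -> R -> C) : Prop :=
  forall k, Ck_on D k (fun x y => complex.Re (f x y)) /\ Ck_on D k (fun x y => complex.Im (f x y)).

Definition pdxC (f : R -> R -> C) : R -> R -> C :=
  fun x y => (pdx (fun a b => complex.Re (f a b)) x y) +i* (pdx (fun a b => complex.Im (f a b)) x y).
Definition pdyC (f : R -> R -> C) : R -> R -> C :=
  fun x y => (pdy (fun a b => complex.Re (f a b)) x y) +i* (pdy (fun a b => complex.Im (f a b)) x y).

Definition dz (f : R -> R -> C) : R -> R -> C :=
  fun x y => (pdxC f x y - 'i * pdyC f x y) / 2%:R.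
Definition dzbar (f : R -> R -> C) : R -> R -> C :=
  fun x y => (pdxC f x y + 'i * pdyC f x y) / 2%:R.

Definition upper_half (x y : R) : Prop := 0 < y.

(* ---------- the data of an open-closed field algebra ----------
   V_cl is R x R-graded: V_cl = (+)_{(r,s)} V_cl(r,s) (projections Pcl r s);
   V_op is R-graded:     V_op = (+)_{n} V_op(n) (projections Pop n).
   An element of the completion \overline{V}_op = prod_n V_op(n) is modelled
   as a family f : R -> V_op with Pop n (f n) = f n.
   Only the component m^{(1;1)}_{cl-op}(u; v; z, zbar; 0) (i.e. r_1 = 0) of
   m_cl-op is recorded, written mY u v x y n = n-th homogeneous component of
   m^{(1;1)}_{cl-op}(u; v; x + i y, x - i y; 0). *)
Record OCFA := {
  Vcl : lmodType C;
  Vop : lmodType C;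
  Pcl : R -> R -> {linear Vcl -> Vcl};
  Pcl_proj : forall r s r' s' u,
      Pcl r s (Pcl r' s' u) = if (r == r') && (s == s') then Pcl r s u else 0;
  Pcl_fin : forall u, exists S : seq (R * R),
      uniq S /\ u = \sum_(p <- S) Pcl p.1 p.2 u /\
      (forall r s, (r, s) \notin S -> Pcl r s u = 0);
  dL : {linear Vcl -> Vcl};
  dR : {linear Vcl -> Vcl};
  dL_spec : forall r s u, Pcl r s (dL u) = r%:C *: Pcl r s u;
  dR_spec : forall r s u, Pcl r s (dR u) = s%:C *: Pcl r s u;
  ecl : R -> {linear Vcl -> Vcl};
  ecl_spec : forall a r s u, Pcl r s (ecl a u) = (expR (a * (r + s)))%:C *: Pcl r s u;
  Pop : R -> {linear Vop -> Vop};
  Pop_proj : forall n n' v, Pop n (Pop n' v) = if n == n' then Pop n v else 0;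
  Pop_fin : forall v, exists S : seq R,
      uniq S /\ v = \sum_(n <- S) Pop n v /\ (forall n, n \notin S -> Pop n v = 0);
  dop : {linear Vop -> Vop};
  dop_spec : forall n v, Pop n (dop v) = n%:C *: Pop n v;
  eop : R -> {linear Vop -> Vop};
  eop_spec : forall a n v, Pop n (eop a v) = (expR (a * n))%:C *: Pop n v;
  mY : Vcl -> Vop -> R -> R -> R -> Vop;
  mY_hom : forall u v x y n, Pop n (mY u v x y n) = mY u v x y n;
  mY_linl : forall v x y n, linear (fun u => mY u v x y n);
  mY_linr : forall u x y n, linear (fun v => mY u v x y n);
  mY_smooth : forall u v n (phi : {scalar Vop}),
      smooth_on upper_half (fun x y => phi (mY u v x y n));
  mY_grading : forall a u v x y n, 0 < y ->
      (expR (a * n))%:C *: mY u v x y n =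
      mY (ecl a u) (eop a v) (expR a * x) (expR a * y) n
}.

Definition Ycl_op (A : OCFA) (u : Vcl A) (x y : R) (v : Vop A) : R -> Vop A :=
  @mY A u v x y.

Definition dop_bar (A : OCFA) (f : R -> Vop A) : R -> Vop A :=
  fun n => n%:C *: f n.

Definition comm_dop_Y (A : OCFA) (u : Vcl A) (x y : R) (v : Vop A) : R -> Vop A :=
  fun n => dop_bar (Ycl_op u x y v) n - Ycl_op u x y (@dop A v) n.

End Defs.

From HB Require Import structures.
From mathcomp Require Import all_boot all_order all_algebra.
From mathcomp Require Import all_classical all_reals topology normedtype derive sequences.
From mathcomp.analysis Require Import exp.
From mathcomp Require Import complex.
From mathcomp.analysis Require Import realfun.
From mathcomp Require Import ring lra.
Import Order.TTheory GRing.Theory Num.Theory numFieldNormedType.Exports.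
Local Open Scope ring_scope.
Local Open Scope complex_scope.
Local Open Scope classical_set_scope.
Set Implicit Arguments. Unset Strict Implicit.

(* Split u and v into homogeneous components of weights (r, s) and m. By the
   grading property, the weight-n component of Y(u; e^a z, e^a zbar) v is then
   e^(a (n - r - s - m)) times its value at z, so every matrix element is a
   finite sum of functions homogeneous under the dilation z |-> e^a z.
   Differentiating at a = 0 gives Euler's relation
   (x d/dx + y d/dy) f = sum (n - r - s - m) f_(r,s,m), and
   x d/dx + y d/dy = z d/dz + zbar d/dzbar.  The weights n, m and r + s are
   those produced by d_op on the output, d_op on v and d^L + d^R on u. *)

Section RealCalculus.
Variable R : realType.
Implicit Types (f : R -> R) (t l : R).

Lemma is_derive0_quotientP f l :
  is_derive (0 : R) 1 f l <-> (fun h => h^-1 * (f h - f 0)) @ 0^' --> l.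
Proof.
have quotE : (fun h : R => h^-1 *: ((f \o shift 0) (h *: 1) - f 0)) =
             (fun h => h^-1 * (f h - f 0)).
  by apply/funext => h /=; rewrite [h *: 1]mulr1 addr0.
split=> [df | fl].
  move: (@ex_derive _ _ _ _ _ _ _ df) (@derive_val _ _ _ _ _ _ _ df).
  by rewrite /derivable /derive quotE => + <-.
apply: DeriveDef; rewrite /derivable /derive quotE.
  exact: cvgP fl.
exact: cvg_lim fl.
Qed.

Lemma MVT_dist f (a b : R) : (forall t, derivable f t 1) ->
  exists c, `|c - a| <= `|b - a| /\ f b - f a = derive1 f c * (b - a).
Proof.
move=> fd.
have df t : is_derive t 1 f (derive1 f t) by rewrite derive1E; exact: derivableP.
have fc s t : {within `[s, t], continuous f}.
  by apply: derivable_within_continuous => r _; exact: fd.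
have [ab | ba] := leP a b.
  have [c] := MVT_segment ab (fun t _ => df t) (fc a b).
  rewrite in_itv /= => /andP[ac cb] E; exists c; split=> //.
  by rewrite !ger0_norm ?subr_ge0 //; lra.
have [c] := MVT_segment (ltW ba) (fun t _ => df t) (fc b a).
rewrite in_itv /= => /andP[bc ca] E; exists c; split.
  by rewrite !ler0_norm ?subr_le0 //; [lra | exact: ltW].
by rewrite -opprB E -mulrN opprB.
Qed.

Lemma is_derive_sum_seq (V W : normedModType R) (I : Type) (s : seq I)
    (F : I -> V -> W) (dF : I -> W) (x v : V) :
  (forall i, is_derive x v (F i) (dF i)) ->
  is_derive x v (fun a => \sum_(i <- s) F i a) (\sum_(i <- s) dF i).
Proof.
move=> dFi; elim: s => [|i s IH].
  rewrite big_nil (_ : (fun _ => _) = cst 0); first exact: is_derive_cst.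
  by apply/funext => a; rewrite big_nil.
rewrite big_cons (_ : (fun _ => _) = F i + (fun a => \sum_(j <- s) F j a)).
  exact: is_deriveD.
by apply/funext => a; rewrite big_cons.
Qed.

Lemma is_derive0_expRM (c K : R) :
  is_derive (0 : R) 1 (fun a => expR (a * c) * K) (c * K).
Proof.
have dlin : is_derive (0 : R) 1 (fun a : R => a * c) c.
  rewrite (_ : (fun a => a * c) = c \*: id).
    by apply: is_derive_eq; rewrite [_%:A]mulr1.
  by apply/funext => a /=; rewrite mulrC.
have dexp : is_derive (0 : R) 1 (expR \o (fun a : R => a * c)) (expR (0 * c) * c).
  exact: is_derive1_comp (is_derive_expR _) dlin.
rewrite (_ : (fun a => _) = K \*: (expR \o (fun a : R => a * c))); last first.
  by apply/funext => a /=; rewrite mulrC.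
by apply: is_derive_eq; rewrite [_ *: _]mulrC mul0r expR0 mul1r.
Qed.

(* The mean value theorem in the first variable writes the increment as
   pdx g (xi h) (q h) * (p h - p 0) with xi h between p 0 and p h; continuity
   of pdx g at (p 0, q 0) then gives the limit. *)
Lemma cvg_increment_pdx (g : R -> R -> R) (p q : R -> R) (dp : R) :
  (forall s t, 0 < t -> derivable (fun r => g r t) s 1) ->
  {for (p 0, q 0), continuous (fun z : R * R => pdx g z.1 z.2)} ->
  is_derive (0 : R) 1 p dp -> {for 0, continuous q} -> 0 < q 0 ->
  (fun h => h^-1 * (g (p h) (q h) - g (p 0) (q h))) @ 0^' -->
  dp * pdx g (p 0) (q 0).
Proof.
move=> gx pdxc pdp qc q0.
have pc : {for 0, continuous p}.
  apply/differentiable_continuous/derivable1_diffP.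
  exact: (@ex_derive _ _ _ _ _ _ _ pdp).
have qpos : \forall h \near 0^', 0 < q h.
  apply: cvg_within; move/cvgrPdist_lt: qc => /(_ _ q0); apply: filterS => h.
  by have := ler_norm (q 0 - q h); lra.
pose P h c := `|c - p 0| <= `|p h - p 0| /\
  g (p h) (q h) - g (p 0) (q h) = pdx g c (q h) * (p h - p 0).
pose xi h := xget (p 0) (P h).
have Pxi h : 0 < q h -> P h (xi h).
  move=> /(fun qh => MVT_dist (p 0) (p h) (fun s => gx s _ qh)) [c Pc].
  by rewrite /xi; case: xgetP => // /(_ c).
have xi_cvg : xi @ 0^' --> p 0.
  apply/cvgrPdist_le => e e0; move/cvgrPdist_le: pc => /(_ e e0) pe.
  near=> h; have qh : 0 < q h by near: h.
  have ph : `|p 0 - p h| <= e by near: h; apply: cvg_within.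
  by rewrite distrC; apply: le_trans (Pxi h qh).1 _; rewrite distrC.
have pdx_cvg : (fun h => pdx g (xi h) (q h)) @ 0^' --> pdx g (p 0) (q 0).
  exact: (continuous2_cvg _ pdxc xi_cvg (cvg_within_filter _ qc)).
have quot_cvg : (fun h => h^-1 * (p h - p 0)) @ 0^' --> dp.
  exact/is_derive0_quotientP.
have incrE : {near 0^', (fun h => pdx g (xi h) (q h) * (h^-1 * (p h - p 0))) =1
                        (fun h => h^-1 * (g (p h) (q h) - g (p 0) (q h)))}.
  near=> h; have qh : 0 < q h by near: h.
  by rewrite /= (Pxi h qh).2 mulrCA.
rewrite mulrC; apply: cvg_trans (near_eq_cvg incrE) _.
exact: cvgM pdx_cvg quot_cvg.
Unshelve. all: by end_near.
Qed.

Lemma chain_rule0_upper_half (g : R -> R -> R) (p q : R -> R) (dp dq : R) :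
  Ck_on (@upper_half R) 1 g ->
  is_derive (0 : R) 1 p dp -> is_derive (0 : R) 1 q dq -> 0 < q 0 ->
  is_derive (0 : R) 1 (fun a => g (p a) (q a))
    (dp * pdx g (p 0) (q 0) + dq * pdy g (p 0) (q 0)).
Proof.
move=> [_ [gd [pdxc _]]] pdp pdq q0.
have qc : {for 0, continuous q}.
  apply/differentiable_continuous/derivable1_diffP.
  exact: (@ex_derive _ _ _ _ _ _ _ pdq).
have gy : is_derive (q 0) 1 (fun t => g (p 0) t) (pdy g (p 0) (q 0)).
  by rewrite /pdy derive1E; apply: derivableP; exact: (gd _ _ q0).2.
have dy : is_derive (0 : R) 1 (fun a => g (p 0) (q a)) (dq * pdy g (p 0) (q 0)).
  by rewrite mulrC; exact: is_derive1_comp.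
have dx : is_derive (0 : R) 1 (fun a => g (p a) (q a) - g (p 0) (q a))
                    (dp * pdx g (p 0) (q 0)).
  apply/is_derive0_quotientP.
  rewrite /= subrr; under eq_fun do rewrite subr0.
  exact: cvg_increment_pdx (fun s t ht => (gd s t ht).1) (pdxc _ _ q0) pdp qc q0.
rewrite (_ : (fun a => _) = (fun a => g (p a) (q a) - g (p 0) (q a)) +
                            (fun a => g (p 0) (q a))); first exact: is_deriveD.
by apply/funext => a /=; rewrite subrK.
Qed.

Lemma euler_expR_sum (g : R -> R -> R) (x y : R) (I : Type) (s : seq I)
    (c K : I -> R) :
  Ck_on (@upper_half R) 1 g -> 0 < y ->
  (forall a, g (expR a * x) (expR a * y) = \sum_(i <- s) expR (a * c i) * K i) ->
  x * pdx g x y + y * pdy g x y = \sum_(i <- s) c i * K i.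
Proof.
move=> gC1 y0 gE.
have dexp t : is_derive (0 : R) 1 (fun a => expR a * t) t.
  by have := is_derive0_expRM 1 t; rewrite mul1r; under eq_fun do rewrite mulr1.
have ey0 : 0 < expR 0 * y by rewrite expR0 mul1r.
have := chain_rule0_upper_half gC1 (dexp x) (dexp y) ey0.
rewrite expR0 !mul1r (funext gE) => dlhs.
have drhs := is_derive_sum_seq s (fun i => is_derive0_expRM (c i) (K i)).
by rewrite -(@derive_val _ _ _ _ _ _ _ dlhs) (@derive_val _ _ _ _ _ _ _ drhs).
Qed.

End RealCalculus.

Section ComplexCoordinates.
Variable R : realType.
Implicit Types (x y : R) (f : R -> R -> R[i]).

Lemma wirtinger_euler f x y :
  (x +i* y) * dz f x y + (x -i* y) * dzbar f x y =
  x%:C * pdxC f x y + y%:C * pdyC f x y.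
Proof.
have -> : x +i* y = x%:C + 'i * y%:C by simpc.
have -> : x -i* y = x%:C - 'i * y%:C by simpc.
rewrite /dz /dzbar; set a := pdxC f x y; set b := pdyC f x y.
have ii : 'i * 'i = -1 :> R[i] by rewrite -expr2 sqr_i.
transitivity (x%:C * a - 'i * 'i * (y%:C * b)); first by field.
by rewrite ii mulN1r opprK.
Qed.

Lemma Re_sum (I : Type) (s : seq I) (F : I -> R[i]) :
  complex.Re (\sum_(i <- s) F i) = \sum_(i <- s) complex.Re (F i).
Proof. exact: (raddf_sum (@complex.Re R : Rcomplex R -> R)). Qed.

Lemma Im_sum (I : Type) (s : seq I) (F : I -> R[i]) :
  complex.Im (\sum_(i <- s) F i) = \sum_(i <- s) complex.Im (F i).
Proof. exact: (raddf_sum (@complex.Im R : Rcomplex R -> R)). Qed.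

Lemma Re_realM (k : R) (z : R[i]) : complex.Re (k%:C * z) = k * complex.Re z.
Proof. by case: z => a b /=; rewrite mul0r subr0. Qed.

Lemma Im_realM (k : R) (z : R[i]) : complex.Im (k%:C * z) = k * complex.Im z.
Proof. by case: z => a b /=; rewrite mul0r addr0. Qed.

Lemma euler_expR_sumC f x y (I : Type) (s : seq I) (c : I -> R) (K : I -> R[i]) :
  Ck_on (@upper_half R) 1 (fun a b => complex.Re (f a b)) ->
  Ck_on (@upper_half R) 1 (fun a b => complex.Im (f a b)) -> 0 < y ->
  (forall a, f (expR a * x) (expR a * y) = \sum_(i <- s) (expR (a * c i))%:C * K i) ->
  x%:C * pdxC f x y + y%:C * pdyC f x y = \sum_(i <- s) (c i)%:C * K i.
Proof.
move=> ReC1 ImC1 y0 fE; apply/eqP; rewrite eq_complex; apply/andP; split; apply/eqP.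
  rewrite Re_sum; under eq_bigr do rewrite Re_realM.
  rewrite /pdxC /pdyC; simpc; apply: euler_expR_sum ReC1 y0 _ => a.
  by rewrite fE Re_sum; under eq_bigr do rewrite Re_realM.
rewrite Im_sum; under eq_bigr do rewrite Im_realM.
rewrite /pdxC /pdyC; simpc; apply: euler_expR_sum ImC1 y0 _ => a.
by rewrite fE Im_sum; under eq_bigr do rewrite Im_realM.
Qed.

End ComplexCoordinates.

Section OpenClosedFieldAlgebra.
Variables (R : realType) (A : OCFA R).
Local Notation C := R[i].
Implicit Types (u w : Vcl A) (v : Vop A) (x y n r s m : R).

Definition Pcl_diagonal (L : Vcl A -> Vcl A) (c : R -> R -> C) :=
  forall r s w, Pcl A r s (L w) = c r s *: Pcl A r s w.

Definition Pop_diagonal (M : Vop A -> Vop A) (c : R -> C) :=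
  forall m v, Pop A m (M v) = c m *: Pop A m v.

Lemma Pcl_idem r s u : Pcl A r s (Pcl A r s u) = Pcl A r s u.
Proof. by rewrite Pcl_proj !eqxx. Qed.

Lemma Pop_idem m v : Pop A m (Pop A m v) = Pop A m v.
Proof. by rewrite Pop_proj eqxx. Qed.

Lemma Pcl_diagonal_homog (L : {linear Vcl A -> Vcl A}) c r s w :
  Pcl_diagonal L c -> Pcl A r s w = w -> L w = c r s *: w.
Proof.
move=> Ldiag wh; have [S [_ [LwS _]]] := Pcl_fin (L w).
suff <- : Pcl A r s (L w) = L w by rewrite Ldiag wh.
rewrite [in RHS]LwS [in LHS]LwS linear_sum; apply: eq_bigr => p _.
rewrite Pcl_proj; case: ifP => [/andP[/eqP <- /eqP <-] // | ne].
by rewrite Ldiag -wh Pcl_proj (eq_sym p.1) (eq_sym p.2) ne scaler0.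
Qed.

Lemma Pop_diagonal_homog (M : {linear Vop A -> Vop A}) c m v :
  Pop_diagonal M c -> Pop A m v = v -> M v = c m *: v.
Proof.
move=> Mdiag vh; have [T [_ [MvT _]]] := Pop_fin (M v).
suff <- : Pop A m (M v) = M v by rewrite Mdiag vh.
rewrite [in RHS]MvT [in LHS]MvT linear_sum; apply: eq_bigr => k _.
rewrite Pop_proj; case: ifP => [/eqP <- // | ne].
by rewrite Mdiag -vh Pop_proj (eq_sym k) ne scaler0.
Qed.

Definition mY_left v x y n : Vcl A -> Vop A := fun u => mY u v x y n.
HB.instance Definition _ v x y n :=
  GRing.isLinear.Build _ _ _ _ (mY_left v x y n) (mY_linl v x y n).

Definition mY_right u x y n : Vop A -> Vop A := fun v => mY u v x y n.
HB.instance Definition _ u x y n :=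
  GRing.isLinear.Build _ _ _ _ (mY_right u x y n) (mY_linr u x y n).

Lemma mY_sum (I J : Type) (S : seq I) (T : seq J) (F : I -> Vcl A)
    (G : J -> Vop A) x y n :
  mY (\sum_(i <- S) F i) (\sum_(j <- T) G j) x y n =
  \sum_(i <- S) \sum_(j <- T) mY (F i) (G j) x y n.
Proof.
rewrite -[LHS]/(mY_left _ x y n _) linear_sum; apply: eq_bigr => i _.
exact: (linear_sum (mY_right (F i) x y n)).
Qed.

Lemma mYZ (k l : C) u v x y n : mY (k *: u) (l *: v) x y n = (k * l) *: mY u v x y n.
Proof.
rewrite -[LHS]/(mY_left (l *: v) x y n (k *: u)) linearZ /= /mY_left.
rewrite -[mY u (l *: v) x y n]/(mY_right u x y n (l *: v)) linearZ /=.
by rewrite scalerA.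
Qed.

Lemma mY_homog_dilation a r s m w v x y n : 0 < y ->
  Pcl A r s w = w -> Pop A m v = v ->
  mY w v (expR a * x) (expR a * y) n =
  (expR (a * (n - (r + s) - m)))%:C *: mY w v x y n.
Proof.
move=> y0 wh vh.
have eclw : ecl A a w = (expR (a * (r + s)))%:C *: w.
  apply: (Pcl_diagonal_homog (c := fun r s => (expR (a * (r + s)))%:C)) wh.
  exact: ecl_spec.
have eopv : eop A a v = (expR (a * m))%:C *: v.
  apply: (Pop_diagonal_homog (c := fun m => (expR (a * m))%:C)) vh.
  exact: eop_spec.
have := mY_grading a w v x n y0; rewrite eclw eopv mYZ => grading.
have nz : (expR (a * (r + s)))%:C * (expR (a * m))%:C != 0 :> C.
  by rewrite -rmorphM fmorph_eq0 -expRD gt_eqF // expR_gt0.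
apply: (scalerI nz); rewrite -grading scalerA -!rmorphM -!expRD.
by congr ((expR _)%:C *: _); ring.
Qed.

Lemma phi_mY_diagonal_expand (phi : {scalar Vop A}) (L : {linear Vcl A -> Vcl A})
    (M : {linear Vop A -> Vop A}) cL cM u v S T x y n :
  Pcl_diagonal L cL -> Pop_diagonal M cM ->
  u = \sum_(p <- S) Pcl A p.1 p.2 u -> v = \sum_(m <- T) Pop A m v ->
  phi (mY (L u) (M v) x y n) =
  \sum_(k <- [seq (p, m) | p <- S, m <- T])
    cL k.1.1 k.1.2 * cM k.2 *
    phi (mY (Pcl A k.1.1 k.1.2 u) (Pop A k.2 v) x y n).
Proof.
move=> Ldiag Mdiag uS vT.
rewrite {1}uS {1}vT !linear_sum mY_sum linear_sum big_allpairs.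
apply: eq_bigr => p _; rewrite linear_sum; apply: eq_bigr => m _ /=.
rewrite (Pcl_diagonal_homog Ldiag (Pcl_idem _ _ _)).
by rewrite (Pop_diagonal_homog Mdiag (Pop_idem _ _)) mYZ linearZ.
Qed.

End OpenClosedFieldAlgebra.

Theorem proposition1p11 (R : realType) (A : OCFA R) (u : Vcl A) (v : Vop A)
    (x y : R) (hy : 0 < y) (n : R) (phi : {scalar Vop A}) :
  phi (comm_dop_Y u x y v n) =
  phi (Ycl_op (@dL R A u + @dR R A u) x y v n)
  + ((x +i* y) * dz (fun a b => phi (Ycl_op u a b v n)) x y
     + (x -i* y) * dzbar (fun a b => phi (Ycl_op u a b v n)) x y).
Proof.
have [S [_ [uS _]]] := Pcl_fin u.
have [T [_ [vT _]]] := Pop_fin v.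
pose K k := phi (mY (Pcl A k.1.1 k.1.2 u) (Pop A k.2 v) x y n).
pose wt (k : (R * R) * R) := n - (k.1.1 + k.1.2) - k.2.
have id_cl : Pcl_diagonal (A := A) idfun (fun _ _ => 1).
  by move=> r s w; rewrite scale1r.
have id_op : Pop_diagonal (A := A) idfun (fun _ => 1).
  by move=> m w; rewrite scale1r.
have dLR : Pcl_diagonal (dL A \+ dR A) (fun r s => r%:C + s%:C).
  by move=> r s w; rewrite /= linearD dL_spec dR_spec scalerDl.
have Y_dilate a : phi (mY u v (expR a * x) (expR a * y) n) =
    \sum_(k <- [seq (p, m) | p <- S, m <- T]) (expR (a * wt k))%:C * K k.
  rewrite (phi_mY_diagonal_expand phi _ _ n id_cl id_op uS vT).
  apply: eq_bigr => k _; rewrite !mul1r.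
  by rewrite (mY_homog_dilation a _ _ hy (Pcl_idem _ _ _) (Pop_idem _ _)) linearZ.
have [ReC1 ImC1] := mY_smooth u v n phi 1.
rewrite wirtinger_euler (euler_expR_sumC ReC1 ImC1 hy Y_dilate).
rewrite /comm_dop_Y /dop_bar /Ycl_op linearB linearZ /=.
rewrite [phi (mY u v x y n)](phi_mY_diagonal_expand phi x y n id_cl id_op uS vT).
rewrite [phi (mY u _ x y n)]
  (phi_mY_diagonal_expand phi x y n id_cl (@dop_spec _ A) uS vT).
rewrite [phi (mY _ v x y n)](phi_mY_diagonal_expand phi x y n dLR id_op uS vT).
rewrite mulr_sumr -sumrB -!big_split /=; apply: eq_bigr => k _.
by rewrite /wt !rmorphB rmorphD /=; ring.
Qed.
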